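(* Let $(X,T)$ be a topological dynamical system and $f\in C(X,\mathbb{R})$. Then for each $x\in X$ and $\epsilon>0$, $$P_s(T,f,x,\epsilon)=\sup_{\mathcal{U}\in\mathcal{C}_X^o}\limsup_{n\to+\infty}\frac1n\log P_n(T,f,\mathcal{U},T^{-n}W^s_\epsilon(x,T)).$$
   Context: A TDS is a compact metric space $(X,d)$ with a homeomorphism $T$. $W^s_\epsilon(x,T)=\{y: d(T^nx,T^ny)\le\epsilon\ \forall n\ge0\}$. $f_n=\sum_{i=0}^{n-1}f\circ T^i$, $d_n(x,y)=\max_{0\le i<n}d(T^ix,T^iy)$, $P_n(T,f,\delta,K)=\sup\sum_{x\in E}\exp f_n(x)$ over $E\subseteq K$ with distinct points at $d_n$-distance $>\delta$, and $P_s(T,f,x,\epsilon)=\lim_{\delta\to0}\limsup_n\frac1n\log P_n(T,f,\delta,T^{-n}W^s_\epsilon(x,T))$. $\mathcal{C}_X$ = finite Borel covers, $\mathcal{C}^o_X$ = finite open covers; $\mathcal{V}\succeq\mathcal{U}$ means refinement; $\mathcal{U}_0^{n-1}=\bigvee_{i=0}^{n-1}T^{-i}\mathcal{U}$; $P_n(T,f,\mathcal{U},K)=\inf\{\sum_{V\in\mathcal{V}}\sup_{x\in V\cap K}\exp f_n(x):\mathcal{V}\in\mathcal{C}_X,\mathcal{V}\succeq\mathcal{U}_0^{n-1}\}$ (empty intersections contribute $0$). *)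

From HB Require Import structures.
From mathcomp Require Import all_boot all_order all_algebra.
From mathcomp Require Import all_classical all_reals.
From mathcomp Require Import ereal topology normedtype sequences exp measure.
Set Implicit Arguments. Unset Strict Implicit. Unset Printing Implicit Defensive.
Import Order.TTheory GRing.Theory Num.Theory.
Local Open Scope classical_set_scope.
Local Open Scope ring_scope.

Section TDS.
Variables (R : realType) (X : choiceType) (d : X -> X -> R).

Definition is_metric : Prop :=
  [/\ forall x y, 0 <= d x y,
      forall x y, d x y = 0 <-> x = y,
      forall x y, d x y = d y x &
      forall x y z, d x z <= d x y + d y z].

Definition dball (x : X) (r : R) : set X := [set y | d x y < r].

Definition dopen (A : set X) : Prop :=
  forall x, A x -> exists2 r : R, 0 < r & dball x r `<=` A.

Definition dcompact : Prop :=
  forall (I : Type) (U : I -> set X), (forall i, dopen (U i)) ->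
    (forall x, exists i, U i x) ->
    exists s : seq I, forall x, has (fun i => `[< U i x >]) s.

Definition dcontinuous_map (g : X -> X) : Prop :=
  forall x (e : R), 0 < e -> exists2 r : R, 0 < r &
    forall y, d x y < r -> d (g x) (g y) < e.

Definition dcontinuous_fun (g : X -> R) : Prop :=
  forall x (e : R), 0 < e -> exists2 r : R, 0 < r &
    forall y, d x y < r -> `|g x - g y| < e.

Definition dhomeo (T Tinv : X -> X) : Prop :=
  [/\ cancel T Tinv, cancel Tinv T, dcontinuous_map T & dcontinuous_map Tinv].

Definition dborel (A : set X) : Prop := <<s dopen >> A.

Variables (T : X -> X) (f : X -> R).

Definition Ws (x : X) (eps : R) : set X :=
  [set y | forall n : nat, d (iter n T x) (iter n T y) <= eps].

Definition fsum (n : nat) (x : X) : R := \sum_(i < n) f (iter i T x).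

Definition dn (n : nat) (x y : X) : R :=
  \big[Num.max/0]_(i < n) d (iter i T x) (iter i T y).

Definition separated (n : nat) (delta : R) (K E : set X) : Prop :=
  [/\ finite_set E, E `<=` K &
      forall a b, E a -> E b -> a <> b -> delta < dn n a b].

Definition Pn_sep (n : nat) (delta : R) (K : set X) : R :=
  sup [set (\sum_(x \in E) expR (fsum n x))%R | E in separated n delta K].

Definition Ps (x : X) (eps : R) : \bar R :=
  lim ((limn_esup (fun n : nat =>
          ((n%:R)^-1 * ln (Pn_sep n delta ((iter n T) @^-1` Ws x eps)))%:E))
       @[delta --> 0^'+]).

Definition open_cover (U : set (set X)) : Prop :=
  [/\ finite_set U, U `<=` dopen & forall x, exists2 A, U A & A x].

Definition borel_cover (V : set (set X)) : Prop :=
  [/\ finite_set V, V `<=` dborel & forall x, exists2 A, V A & A x].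

Definition refines (V W : set (set X)) : Prop :=
  forall A, V A -> exists2 B, W B & A `<=` B.

Definition join_cover (U : set (set X)) (n : nat) : set (set X) :=
  [set A | exists g : nat -> set X, (forall i, (i < n)%N -> U (g i)) /\
     A = \bigcap_(i in [set i : nat | (i < n)%N]) ((iter i T) @^-1` g i)].

Definition cell_weight (n : nat) (K V : set X) : R :=
  if `[< V `&` K = set0 >] then 0
  else sup [set expR (fsum n x) | x in V `&` K].

Definition Pn_cov (n : nat) (U : set (set X)) (K : set X) : R :=
  inf [set (\sum_(V \in W) cell_weight n K V)%R
      | W in [set W | borel_cover W /\ refines W (join_cover U n)]].

End TDS.

From Pilot Require Import Defs.
From HB Require Import structures.
From mathcomp Require Import all_boot all_order all_algebra.
From mathcomp Require Import all_classical all_reals.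
From mathcomp Require Import ereal topology normedtype sequences exp measure.
From mathcomp Require Import realfun.
From mathcomp Require Import lra.
Import Order.TTheory GRing.Theory Num.Theory.
Local Open Scope classical_set_scope.
Local Open Scope ring_scope.
Set Implicit Arguments. Unset Strict Implicit. Unset Printing Implicit Defensive.

(* Separated sets against covers: distinct points of an (n, 2r)-separated set
   lie in distinct cells of any Borel refinement of the n-th join of a cover U
   by r-balls, hence P_n(T,f,2r,K) <= P_n(T,f,U,K).
   Covers against separated sets: let U be an open cover with Lebesgue number
   L and let s be a maximal (n,δ)-separated subset of K with δ <= L.  The closed
   d_n-balls of radius δ around s, together with the cells of the n-th join of
   U minus these balls, form a Borel refinement of that join; the extra cells
   miss K, and on each ball f_n varies by at most nγ once δ is below the modulus
   of uniform continuity of f for γ.  Hence P_n(T,f,U,K) <= e^{nγ} P_n(T,f,δ,K).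
   For K = T^{-n} W^s_ε(x,T), taking (1/n) log, limsup_n and the monotone limit
   δ -> 0+ turns these two inequalities into the equality. *)

Lemma seq_lbound_gt0 (R : realDomainType) (A : eqType) (s : seq A) (h : A -> R) :
  (forall a, 0 < h a) -> exists2 L, 0 < L & forall a, a \in s -> L <= h a.
Proof.
move=> h_gt0; elim: s => [|a s [L L_gt0 hL]]; first by exists 1.
exists (Num.min (h a) L); first by rewrite lt_min h_gt0 L_gt0.
move=> b; rewrite inE => /orP[/eqP->|bs]; first by rewrite ge_min lexx.
by rewrite ge_min hL ?orbT.
Qed.

Lemma seq_ubound (R : realDomainType) (A : eqType) (s : seq A) (h : A -> R) :
  exists M, forall a, a \in s -> h a <= M.
Proof.
elim: s => [|a s [M hM]]; first by exists 0.
exists (Num.max (h a) M) => b; rewrite inE => /orP[/eqP->|bs].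
  by rewrite le_max lexx.
by rewrite le_max hM ?orbT.
Qed.

Section FiniteSums.
Variable R : realDomainType.

Lemma finite_set_uniq_seq (I : choiceType) (A : set I) : finite_set A ->
  exists2 s : seq I, uniq s & A = [set` s].
Proof.
move=> /finite_seqP[s ->]; exists (undup s); first exact: undup_uniq.
by apply/seteqP; split => x /=; rewrite mem_undup.
Qed.

Lemma ler_fsum (I : choiceType) (A : set I) (F G : I -> R) :
  finite_set A -> (forall i, A i -> F i <= G i) ->
  \sum_(i \in A) F i <= \sum_(i \in A) G i.
Proof.
move=> /finite_set_uniq_seq[s us ->] FG; rewrite -!fsbig_seq //.
by rewrite big_seq_cond [X in _ <= X]big_seq_cond; apply: ler_sum => i /andP[/FG].
Qed.

Lemma ler_fsum_nneg_subset (I : choiceType) (A B : set I) (F : I -> R) :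
  A `<=` B -> finite_set B -> (forall i, B i -> 0 <= F i) ->
  \sum_(i \in A) F i <= \sum_(i \in B) F i.
Proof.
move=> AB finB F_ge0; rewrite [X in _ <= X](fsbigID A) // setIidr //.
by rewrite lerDl; apply: fsumr_ge0 => i [/F_ge0].
Qed.

Lemma ler_sum_undup (I : eqType) (s : seq I) (F : I -> R) :
  (forall i, i \in s -> 0 <= F i) ->
  \sum_(i <- undup s) F i <= \sum_(i <- s) F i.
Proof.
elim: s => [//|x s IH] F_ge0 /=.
have {}IH : \sum_(i <- undup s) F i <= \sum_(i <- s) F i.
  by apply: IH => i si; apply: F_ge0; rewrite inE si orbT.
rewrite big_cons; case: ifP => xs; last by rewrite big_cons lerD2l.
by apply: (le_trans IH); rewrite lerDr; apply: F_ge0; rewrite mem_head.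
Qed.

Lemma ler_fsum_image (I J : choiceType) (A : set I) (h : I -> J) (F : J -> R) :
  finite_set A -> (forall i, A i -> 0 <= F (h i)) ->
  \sum_(j \in h @` A) F j <= \sum_(i \in A) F (h i).
Proof.
move=> /finite_set_uniq_seq[s us ->] F_ge0.
have -> : h @` [set` s] = [set` undup (map h s)].
  apply/seteqP; split => j /=.
    by move=> [i si <-]; rewrite mem_undup map_f.
  by rewrite mem_undup => /mapP[i si ->]; exists i.
rewrite -fsbig_seq ?undup_uniq // -fsbig_seq // -(big_map h xpredT F).
by apply: ler_sum_undup => j /mapP[i si ->]; apply: F_ge0.
Qed.

Lemma ler_sum_seq_const (I : eqType) (s : seq I) (F : I -> R) (c : R) :
  (forall i, i \in s -> F i <= c) -> \sum_(i <- s) F i <= (size s)%:R * c.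
Proof.
elim: s => [|a s IH] Fc /=; first by rewrite big_nil mul0r.
rewrite big_cons -addn1 natrD mulrDl mul1r addrC; apply: lerD.
  by apply: IH => i si; apply: Fc; rewrite inE si orbT.
by apply: Fc; rewrite mem_head.
Qed.

End FiniteSums.

Section Metric.
Variables (R : realType) (X : choiceType) (d : X -> X -> R).
Hypothesis d_metric : is_metric d.

Lemma metric_xx x : d x x = 0. Proof. by case: d_metric => _ H _ _; apply/H. Qed.
Lemma metricC x y : d x y = d y x. Proof. by case: d_metric. Qed.
Lemma metric_triangle x y z : d x z <= d x y + d y z. Proof. by case: d_metric. Qed.

Lemma dopen_dball x r : dopen d (dball d x r).
Proof.
move=> y; rewrite /dball /= => dxy; exists (r - d x y); first by rewrite subr_gt0.
move=> z; rewrite /dball /= ltrBrDl => dyz.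
exact: le_lt_trans (metric_triangle x y z) _.
Qed.

Lemma dopenI A B : dopen d A -> dopen d B -> dopen d (A `&` B).
Proof.
move=> oA oB y [Ay By]; have [r1 r1_gt0 h1] := oA y Ay.
have [r2 r2_gt0 h2] := oB y By.
exists (Num.min r1 r2); first by rewrite lt_min r1_gt0 r2_gt0.
by move=> z; rewrite /dball /= lt_min => /andP[z1 z2]; split; [apply: h1|apply: h2].
Qed.

Lemma dopenT : dopen d setT. Proof. by move=> y _; exists 1. Qed.

Lemma dopen_preimage (g : X -> X) A :
  dcontinuous_map d g -> dopen d A -> dopen d (g @^-1` A).
Proof.
move=> g_cont oA x /= Agx; have [r r_gt0 hr] := oA (g x) Agx.
by have [r' r'_gt0 h'] := g_cont x r r_gt0; exists r' => // y /h' /hr.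
Qed.

Lemma dopen_borel A : dopen d A -> dborel d A.
Proof. exact: sub_sigma_algebra. Qed.

Lemma dborel_dopenC A : dopen d (~` A) -> dborel d A.
Proof.
move=> oAC; rewrite /dborel -[A]setCK -setTD; apply: sigma_algebraCD.
exact: sub_sigma_algebra.
Qed.

Lemma lebesgue_number (U : set (set X)) : dcompact d -> U `<=` dopen d ->
  (forall y, exists2 A, U A & A y) ->
  exists2 L : R, 0 < L & forall z, exists2 A, U A & [set w | d z w <= L] `<=` A.
Proof.
move=> d_cpt oU covU.
have hr y : exists r : R, 0 < r /\ exists2 A, U A & dball d y (r *+ 2) `<=` A.
  have [A UA Ay] := covU y; have [r r_gt0 hr] := oU A UA y Ay.
  exists (r / 2); split; first by rewrite divr_gt0.
  by exists A => //; rewrite mulr2n -splitr.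
pose rho y := projT1 (cid (hr y)).
have rhoP y : 0 < rho y /\ exists2 A, U A & dball d y (rho y *+ 2) `<=` A.
  exact: projT2 (cid (hr y)).
have [s hs] : exists s : seq X, forall z, has (fun i => `[< dball d i (rho i) z >]) s.
  apply: (d_cpt X _ (fun y => @dopen_dball y (rho y))) => y.
  by exists y; rewrite /dball /= metric_xx; case: (rhoP y).
have [L L_gt0 hL] := seq_lbound_gt0 s (fun y => proj1 (rhoP y)).
exists L => // z; have /hasP[y ys /asboolP yz] := hs z.
have [_ [A UA hA]] := rhoP y; exists A => // w /= dzw; apply: hA.
rewrite /dball /=; apply: le_lt_trans (metric_triangle y z w) _.
by rewrite mulr2n; apply: ltr_leD => //; apply: le_trans dzw (hL _ ys).
Qed.

End Metric.

Lemma dcontinuous_iter (R : realType) (X : choiceType) (d : X -> X -> R)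
  (g : X -> X) n : dcontinuous_map d g -> dcontinuous_map d (iter n g).
Proof.
move=> g_cont; elim: n => [|n IH] x e e_gt0 /=; first by exists e.
have [r1 r1_gt0 h1] := g_cont (iter n g x) e e_gt0.
by have [r2 r2_gt0 h2] := IH x r1 r1_gt0; exists r2 => // y /h2 /h1.
Qed.

Section Bowen.
Variables (R : realType) (X : choiceType) (d : X -> X -> R) (T : X -> X).
Hypotheses (d_metric : is_metric d) (T_cont : dcontinuous_map d T).
Local Notation dn := (dn d T).

Lemma dn0 x y : dn 0 x y = 0. Proof. by rewrite /Defs.dn big_ord0. Qed.

Lemma dnS n x y : dn n.+1 x y = Num.max (d x y) (dn n (T x) (T y)).
Proof.
rewrite /Defs.dn big_ord_recl /=; congr Num.max.
by apply: eq_bigr => i _; rewrite /= /bump /= add0n -!iterS !iterSr.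
Qed.

Lemma dn_ge0 n x y : 0 <= dn n x y.
Proof. by elim: n x y => [|n IH] x y; rewrite ?dn0 // dnS le_max IH orbT. Qed.

Lemma dn_leP n x y r : 0 <= r ->
  dn n x y <= r <-> forall i, (i < n)%N -> d (iter i T x) (iter i T y) <= r.
Proof.
move=> r_ge0; elim: n x y => [|n IH] x y; first by rewrite dn0; split => // _ i.
rewrite dnS ge_max; split.
  by move=> /andP[dxy /IH h] [|i] //; rewrite ltnS !iterSr; apply: h.
move=> h; apply/andP; split; first exact: (h 0%N).
by apply/IH => i lt_in; rewrite -!iterSr; apply: (h i.+1).
Qed.

Lemma dn_ltP n x y r : 0 < r ->
  dn n x y < r <-> forall i, (i < n)%N -> d (iter i T x) (iter i T y) < r.
Proof.
move=> r_gt0; elim: n x y => [|n IH] x y; first by rewrite dn0; split => // _ i.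
rewrite dnS gt_max; split.
  by move=> /andP[dxy /IH h] [|i] //; rewrite ltnS !iterSr; apply: h.
move=> h; apply/andP; split; first exact: (h 0%N).
by apply/IH => i lt_in; rewrite -!iterSr; apply: (h i.+1).
Qed.

Lemma le_dn n x y i : (i < n)%N -> d (iter i T x) (iter i T y) <= dn n x y.
Proof. by move: i; apply/dn_leP => //; apply: dn_ge0. Qed.

Lemma dnC n x y : dn n x y = dn n y x.
Proof. by apply: eq_bigr => i _; rewrite (metricC d_metric). Qed.

Lemma dn_xx n x : dn n x x = 0.
Proof.
apply/le_anti; rewrite dn_ge0 andbT.
by apply/dn_leP => // i _; rewrite (metric_xx d_metric).
Qed.

Lemma dn_triangle n x y z : dn n x z <= dn n x y + dn n y z.
Proof.
apply/dn_leP => [|i lt_in]; first by rewrite addr_ge0 // dn_ge0.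
by apply: le_trans (metric_triangle d_metric _ (iter i T y) _) _; apply: lerD; apply: le_dn.
Qed.

Lemma dn_continuous n y (e : R) : 0 < e ->
  exists2 r : R, 0 < r & forall z, d y z < r -> dn n y z < e.
Proof.
move=> e_gt0; elim: n y => [|n IH] y; first by exists 1 => // z _; rewrite dn0.
have [r1 r1_gt0 h1] := IH (T y).
have [r2 r2_gt0 h2] := T_cont y r1_gt0.
exists (Num.min e r2); first by rewrite lt_min e_gt0 r2_gt0.
by move=> z; rewrite lt_min dnS gt_max => /andP[-> /h2 /h1].
Qed.

Lemma dopen_dn_lt n y r : dopen d [set z | dn n y z < r].
Proof.
move=> z /= dnyz; have gap : 0 < r - dn n y z by rewrite subr_gt0.
have [r' r'_gt0 h] := dn_continuous n z gap.
exists r' => // w /h dnzw; apply: le_lt_trans (dn_triangle n y z w) _.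
by rewrite -ltrBrDl.
Qed.

Lemma dopen_dn_gt n y r : dopen d [set z | r < dn n y z].
Proof.
move=> z /= dnyz; have gap : 0 < dn n y z - r by rewrite subr_gt0.
have [r' r'_gt0 h] := dn_continuous n z gap.
exists r' => // w /h dnzw /=; have := dn_triangle n y w z; rewrite (dnC n w z).
lra.
Qed.

End Bowen.

Section ContinuousFunction.
Variables (R : realType) (X : choiceType) (d : X -> X -> R) (f : X -> R).
Hypotheses (d_metric : is_metric d) (d_cpt : dcompact d).
Hypothesis f_cont : dcontinuous_fun d f.

Lemma dopen_fball y (r : R) : dopen d [set w | `|f y - f w| < r].
Proof.
move=> z /= fyz; have gap : 0 < r - `|f y - f z| by rewrite subr_gt0.
have [r' r'_gt0 h] := f_cont z gap.
exists r' => // w /h fzw /=; apply: le_lt_trans (ler_distD (f z) _ _) _.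
by rewrite -ltrBrDl.
Qed.

Lemma dcontinuous_fun_bounded : exists M : R, forall y, `|f y| <= M.
Proof.
have cover y : exists z, [set w | `|f z - f w| < 1] y by exists y; rewrite /= subrr normr0.
have [s hs] := d_cpt (fun y => @dopen_fball y 1) cover.
have [M hM] := seq_ubound s (fun y => `|f y| + 1).
exists M => z; have /hasP[y ys /asboolP /= fyz] := hs z.
apply: le_trans (hM y ys); have := ler_distD (f y) 0 (f z).
by rewrite !sub0r !normrN => ?; lra.
Qed.

Lemma dcontinuous_fun_uniform (e : R) : 0 < e -> exists2 r : R, 0 < r &
  forall y z, d y z <= r -> `|f y - f z| <= e.
Proof.
move=> e_gt0.
pose U := [set [set w | `|f y - f w| < e / 2] | y in setT].
have [|y|L L_gt0 hL] := @lebesgue_number _ _ _ d_metric U d_cpt.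
- by move=> _ [y _ <-]; apply: dopen_fball.
- exists [set w | `|f y - f w| < e / 2]; first by exists y.
  by rewrite /= subrr normr0 divr_gt0.
exists L => // y z dyz; have [_ [y0 _ <-] hA] := hL y.
have dyy : d y y <= L by rewrite metric_xx // ltW.
have /= fy := hA y dyy.
have /= fz := hA z dyz.
have := ler_distD (f y0) (f y) (f z); rewrite (distrC (f y) (f y0)); lra.
Qed.

End ContinuousFunction.

Lemma bigcap_ltnS (X : Type) (P : nat -> set X) n :
  \bigcap_(i in [set i | (i < n.+1)%N]) P i =
  \bigcap_(i in [set i | (i < n)%N]) P i `&` P n.
Proof.
rewrite -[[set i | (i < n.+1)%N]]/(`I_n.+1) -[[set i | (i < n)%N]]/(`I_n).
by rewrite !bigcap_mkord big_ord_recr.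
Qed.

Lemma bigcap_ltn0 (X : Type) (P : nat -> set X) :
  \bigcap_(i in [set i | (i < 0)%N]) P i = setT.
Proof. by rewrite -[[set i | (i < 0)%N]]/(`I_0) bigcap_mkord big_ord0. Qed.

Section JoinCover.
Variables (R : realType) (X : choiceType) (d : X -> X -> R) (T : X -> X).
Hypothesis T_cont : dcontinuous_map d T.
Variable U : set (set X).

Lemma join_cover_open n : U `<=` dopen d -> join_cover T U n `<=` dopen d.
Proof.
move=> oU _ [g [Ug ->]]; elim: n Ug => [|n IH] Ug.
  by rewrite bigcap_ltn0; apply: dopenT.
rewrite bigcap_ltnS; apply: dopenI.
  by apply: IH => i lt_in; apply: Ug; rewrite ltnS ltnW.
by apply: dopen_preimage (dcontinuous_iter n T_cont) (oU _ (Ug n _)).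
Qed.

Lemma join_cover_finite n : finite_set U -> finite_set (join_cover T U n).
Proof.
move=> finU; elim: n => [|n IH].
  apply: (@sub_finite_set _ _ [set setT]); last exact: finite_set1.
  by move=> _ [g [_ ->]]; rewrite bigcap_ltn0.
apply: (@sub_finite_set _ _
  [set A `&` (iter n T @^-1` B) | A in join_cover T U n & B in U]); last first.
  exact: finite_image2.
move=> _ [g [Ug ->]].
exists (\bigcap_(i in [set i | (i < n)%N]) (iter i T @^-1` g i)).
  by exists g; split => // i lt_in; apply: Ug; rewrite ltnS ltnW.
by exists (g n); [apply: Ug|rewrite bigcap_ltnS].
Qed.

Lemma join_cover_covers n : (forall y, exists2 A, U A & A y) ->
  forall y, exists2 C, join_cover T U n C & C y.
Proof.
move=> covU y; pose g i := projT1 (cid2 (covU (iter i T y))).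
have gP i : U (g i) /\ g i (iter i T y) by rewrite /g; case: cid2.
exists (\bigcap_(i in [set i | (i < n)%N]) (iter i T @^-1` g i)).
  by exists g; split => // i _; case: (gP i).
by move=> i _ /=; case: (gP i).
Qed.

Lemma join_cover_borel n : open_cover d U -> borel_cover d (join_cover T U n).
Proof.
move=> [finU oU covU]; split; first exact: join_cover_finite.
  by move=> A /(join_cover_open oU); apply: dopen_borel.
exact: join_cover_covers.
Qed.

End JoinCover.

Section Separated.
Variables (R : realType) (X : choiceType) (d : X -> X -> R) (T : X -> X).
Hypotheses (d_metric : is_metric d) (T_cont : dcontinuous_map d T).
Hypothesis d_cpt : dcompact d.
Local Notation dn := (dn d T).

Lemma separated_size_bound n (del : R) : 0 < del -> exists N : nat,
  forall s : seq X, uniq s ->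
  (forall a b, a \in s -> b \in s -> a != b -> del < dn n a b) -> (size s <= N)%N.
Proof.
move=> del_gt0.
have cover y : exists z, [set w | dn n z w < del / 2] y.
  by exists y; rewrite /= dn_xx // divr_gt0.
have [t ht] := d_cpt (fun y => @dopen_dn_lt _ _ _ _ d_metric T_cont n y (del / 2)) cover.
have near_t a : exists y, y \in t /\ dn n y a < del / 2.
  by have /hasP[y yt /asboolP ya] := ht a; exists y.
pose c a := projT1 (cid (near_t a)).
have cP a : c a \in t /\ dn n (c a) a < del / 2 := projT2 (cid (near_t a)).
exists (size t) => s us sep_s.
have c_inj : {in s &, injective c}.
  move=> a b sa sb cab; apply/eqP; apply: contraT => neq_ab.
  have := sep_s a b sa sb neq_ab; have := dn_triangle T d_metric n a (c a) b.
  rewrite (dnC T d_metric n a (c a)) {2}cab; have [_ ?] := cP a; have [_ ?] := cP b.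
  lra.
rewrite -(size_map c); apply: uniq_leq_size; first by rewrite map_inj_in_uniq.
by move=> y /mapP[a _ ->]; case: (cP a).
Qed.

(* A maximal separated set is spanning: every point of K is d_n-close to it. *)
Lemma exists_spanning_separated n (del : R) K : 0 < del -> exists s : seq X,
  [/\ uniq s, Defs.separated d T n del K [set` s] &
      forall y, K y -> exists2 a, a \in s & dn n a y <= del].
Proof.
move=> del_gt0; have [N size_le] := separated_size_bound n del_gt0.
pose sep_of_size k := `[< exists s : seq X, [/\ uniq s, size s = k, [set` s] `<=` K &
   forall a b, a \in s -> b \in s -> a != b -> del < dn n a b] >].
have sep_of_size0 : exists k, sep_of_size k.
  by exists 0%N; apply/asboolP; exists [::].
have size_ub k : sep_of_size k -> (k <= N)%N.
  by move=> /asboolP[s [us <- _]]; apply: size_le.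
case: (ex_maxnP sep_of_size0 size_ub) => _ /asboolP[s [us <- sK sep_s]] max_m.
exists s; split => //.
  by split=> [|//|a b /= sa sb /eqP]; [exact: finite_seq|apply: sep_s].
move=> y Ky; apply: contrapT => far_y.
have far a : a \in s -> del < dn n a y.
  by move=> sa; rewrite ltNge; apply/negP => ?; apply: far_y; exists a.
have ys : y \notin s.
  by apply/negP => sy; have := far y sy; rewrite dn_xx // ltNge ltW.
suff /max_m : sep_of_size (size s).+1 by rewrite ltnn.
apply/asboolP; exists (y :: s); split => //=; first by rewrite ys.
  by move=> z /=; rewrite inE => /orP[/eqP->|/sK].
move=> a b; rewrite !inE => /orP[/eqP->|sa] /orP[/eqP->|sb]; rewrite ?eqxx //.
- by rewrite dnC //; move=> _; apply: far.
- by move=> _; apply: far.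
- exact: sep_s.
Qed.

End Separated.

Section Pressures.
Variables (R : realType) (X : choiceType) (d : X -> X -> R) (T : X -> X) (f : X -> R).
Hypotheses (d_metric : is_metric d) (T_cont : dcontinuous_map d T).
Hypotheses (d_cpt : dcompact d) (f_cont : dcontinuous_fun d f).

Lemma fsum_linear_bound : exists M : R, forall n y, fsum T f n y <= n%:R * M.
Proof.
have [M fM] := dcontinuous_fun_bounded d_cpt f_cont; exists M => n y.
apply: le_trans (_ : \sum_(i < n) M <= _); last by rewrite sumr_const card_ord mulr_natl.
by apply: ler_sum => i _; apply: le_trans (ler_norm _) (fM _).
Qed.

Lemma expR_fsum_ubound n (A : set X) : has_ubound [set expR (fsum T f n y) | y in A].
Proof.
have [M fsumM] := fsum_linear_bound.
by exists (expR (n%:R * M)) => _ [y _ <-]; rewrite ler_expR.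
Qed.

Variables (n : nat) (K : set X).

Definition separated_sums (del : R) :=
  [set \sum_(y \in E) expR (fsum T f n y) | E in Defs.separated d T n del K].

Lemma separated_sums0 del : separated_sums del 0.
Proof. by exists set0; [split|rewrite fsbig_set0]. Qed.

Lemma separated_sums_ubound del : 0 < del -> has_ubound (separated_sums del).
Proof.
move=> del_gt0; have [N size_le] := separated_size_bound d_metric T_cont d_cpt n del_gt0.
have [M fsumM] := fsum_linear_bound.
exists (N%:R * expR (n%:R * M)) => _ [E [finE _ sepE] <-].
have [s us Es] := finite_set_uniq_seq finE; rewrite {}Es in sepE *.
rewrite -fsbig_seq //; apply: le_trans (ler_sum_seq_const (c := expR (n%:R * M)) _) _.
  by move=> y _; rewrite ler_expR.
rewrite ler_wpM2r ?expR_ge0 // ler_nat; apply: size_le => // a b sa sb /eqP.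
exact: sepE.
Qed.

Lemma sum_separated_le_Pn_sep del E : 0 < del -> Defs.separated d T n del K E ->
  \sum_(y \in E) expR (fsum T f n y) <= Pn_sep d T f n del K.
Proof.
by move=> del_gt0 sepE; apply: (ub_le_sup (separated_sums_ubound del_gt0)); exists E.
Qed.

Lemma Pn_sep_le del c : (forall E, Defs.separated d T n del K E ->
  \sum_(y \in E) expR (fsum T f n y) <= c) -> Pn_sep d T f n del K <= c.
Proof.
move=> sum_le; apply: ge_sup => [|_ [E sepE <-]]; last exact: sum_le.
by exists 0; apply: separated_sums0.
Qed.

Lemma Pn_sep_gt0 del y : K y -> 0 < del -> 0 < Pn_sep d T f n del K.
Proof.
move=> Ky del_gt0; apply: lt_le_trans (sum_separated_le_Pn_sep (E := [set y]) del_gt0 _).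
  by rewrite fsbig_set1 expR_gt0.
by split; [exact: finite_set1|move=> z ->|move=> a b -> -> /(_ erefl)].
Qed.

Lemma Pn_sep_antitone del1 del2 : 0 < del1 -> del1 <= del2 ->
  Pn_sep d T f n del2 K <= Pn_sep d T f n del1 K.
Proof.
move=> del1_gt0 le_del; apply: Pn_sep_le => E [finE EK sepE].
apply: sum_separated_le_Pn_sep => //; split => // a b Ea Eb neq_ab.
exact: le_lt_trans le_del (sepE a b Ea Eb neq_ab).
Qed.

Lemma cell_weight_ge0 V : 0 <= cell_weight T f n K V.
Proof.
rewrite /cell_weight; case: ifPn => // /asboolP/eqP/set0P[y VKy].
apply: le_trans (ltW (expR_gt0 (fsum T f n y))) _.
by apply: (ub_le_sup (expR_fsum_ubound n _)); exists y.
Qed.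

Lemma le_cell_weight V y : V y -> K y -> expR (fsum T f n y) <= cell_weight T f n K V.
Proof.
move=> Vy Ky; rewrite /cell_weight; case: ifPn => [/asboolP VK0|_].
  by have : (V `&` K) y by []; rewrite VK0.
by apply: (ub_le_sup (expR_fsum_ubound n _)); exists y.
Qed.

Lemma cell_weight_le V c : 0 <= c ->
  (forall y, V y -> K y -> expR (fsum T f n y) <= c) -> cell_weight T f n K V <= c.
Proof.
move=> c_ge0 Vc; rewrite /cell_weight; case: ifPn => // /asboolP/eqP/set0P[y VKy].
apply: ge_sup => [|_ [z [Vz Kz] <-]]; last exact: Vc.
by exists (expR (fsum T f n y)), y.
Qed.

Definition refinement_sums (U : set (set X)) :=
  [set \sum_(V \in W) cell_weight T f n K V
    | W in [set W | borel_cover d W /\ refines W (join_cover T U n)]].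

Lemma Pn_cov_le_refinement_sum U W :
  borel_cover d W -> refines W (join_cover T U n) ->
  Pn_cov d T f n U K <= \sum_(V \in W) cell_weight T f n K V.
Proof.
move=> borelW refW; apply: (@ge_inf _ (refinement_sums U)); last by exists W.
by exists 0 => _ [W' _ <-]; apply: fsumr_ge0 => V _; apply: cell_weight_ge0.
Qed.

Lemma le_Pn_cov U c : open_cover d U ->
  (forall W, borel_cover d W -> refines W (join_cover T U n) ->
     c <= \sum_(V \in W) cell_weight T f n K V) ->
  c <= Pn_cov d T f n U K.
Proof.
move=> openU le_sum; apply: lb_le_inf => [|_ [W [borelW refW] <-]]; last exact: le_sum.
exists (\sum_(V \in join_cover T U n) cell_weight T f n K V).
by exists (join_cover T U n) => //; split; [apply: join_cover_borel|move=> A; exists A].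
Qed.

Lemma Pn_cov_gt0 U y : K y -> open_cover d U -> 0 < Pn_cov d T f n U K.
Proof.
move=> Ky openU; apply: lt_le_trans (expR_gt0 (fsum T f n y)) _.
apply: le_Pn_cov => // W [finW _ covW] _; have [V WV Vy] := covW y.
apply: le_trans (le_cell_weight Vy Ky) _.
rewrite -(@fsbig_set1 R 0 +%R _ V (cell_weight T f n K)).
by apply: ler_fsum_nneg_subset => // [_ ->//|V' _]; apply: cell_weight_ge0.
Qed.

End Pressures.

Section SeparatedBelowCovering.
Variables (R : realType) (X : choiceType) (d : X -> X -> R) (T : X -> X) (f : X -> R).
Hypotheses (d_metric : is_metric d) (T_cont : dcontinuous_map d T).
Hypotheses (d_cpt : dcompact d) (f_cont : dcontinuous_fun d f).

Lemma exists_dball_cover (r : R) : 0 < r ->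
  exists2 U, open_cover d U & U `<=` [set dball d y r | y in setT].
Proof.
move=> r_gt0; have cover y : exists z, dball d z r y.
  by exists y; rewrite /dball /= metric_xx.
have [t ht] := d_cpt (fun y => @dopen_dball _ _ _ d_metric y r) cover.
exists [set dball d y r | y in [set` t]] => [|_ [y _ <-]]; last by exists y.
split=> [|_ [y _ <-]|z]; first exact: finite_image.
  exact: dopen_dball.
by have /hasP[y yt /asboolP yz] := ht z; exists (dball d y r) => //; exists y.
Qed.

Lemma dn_lt_join_cell U n (r : R) C a b : 0 < r ->
  U `<=` [set dball d y r | y in setT] -> join_cover T U n C -> C a -> C b ->
  dn d T n a b < r *+ 2.
Proof.
move=> r_gt0 U_balls [g [Ug ->]] Ca Cb; apply/dn_ltP => [|i lt_in].
  by rewrite mulrn_wgt0.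
have [y _ gi] := U_balls _ (Ug i lt_in).
have := Ca i lt_in; have := Cb i lt_in; rewrite /= -gi /dball /= => yb ya.
apply: le_lt_trans (metric_triangle d_metric _ y _) _.
by rewrite (metricC d_metric _ y) mulr2n ltrD.
Qed.

Lemma Pn_sep_le_Pn_cov_dball_cover U (r : R) n K : 0 < r -> open_cover d U ->
  U `<=` [set dball d y r | y in setT] ->
  Pn_sep d T f n (r *+ 2) K <= Pn_cov d T f n U K.
Proof.
move=> r_gt0 openU U_balls; apply: Pn_sep_le => E [finE EK sepE].
apply: le_Pn_cov => // W [finW borelW covW] refW.
pose c a := projT1 (cid2 (covW a)).
have cP a : W (c a) /\ c a a by rewrite /c; case: cid2.
have c_inj : set_inj E c.
  move=> a b; rewrite !inE => Ea Eb cab; apply: contrapT => neq_ab.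
  have [Wca ca] := cP a; have [_ cb] := cP b; rewrite -cab in cb.
  have [C joinC caC] := refW _ Wca.
  have := sepE a b Ea Eb neq_ab.
  by rewrite ltNge ltW // (dn_lt_join_cell r_gt0 U_balls joinC (caC _ ca) (caC _ cb)).
apply: le_trans (_ : \sum_(a \in E) cell_weight T f n K (c a) <= _).
  apply: ler_fsum => // a Ea; have [_ ca] := cP a.
  exact: (le_cell_weight T d_cpt f_cont n ca (EK _ Ea)).
rewrite -fsbig_image //; apply: ler_fsum_nneg_subset => // [_ [a _ <-]|V _].
  by case: (cP a).
exact: (cell_weight_ge0 T d_cpt f_cont).
Qed.

End SeparatedBelowCovering.

Lemma fsum_le_dn_close (R : realType) (X : choiceType) (d : X -> X -> R)
  (T : X -> X) (f : X -> R) (r g : R) n a y :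
  (forall y z, d y z <= r -> `|f y - f z| <= g) -> dn d T n a y <= r ->
  fsum T f n y <= n%:R * g + fsum T f n a.
Proof.
move=> f_unif ay; rewrite /fsum.
apply: le_trans (_ : _ <= \sum_(i < n) (g + f (iter i T a))) _; last first.
  by rewrite big_split /= sumr_const card_ord mulr_natl.
apply: ler_sum => i _.
have := f_unif _ _ (le_trans (le_dn d T a y (ltn_ord i)) ay).
by rewrite distrC => /(le_trans (ler_norm _)); lra.
Qed.

Section CoveringBelowSeparated.
Variables (R : realType) (X : choiceType) (d : X -> X -> R) (T : X -> X) (f : X -> R).
Hypotheses (d_metric : is_metric d) (T_cont : dcontinuous_map d T).
Hypotheses (d_cpt : dcompact d) (f_cont : dcontinuous_fun d f).
Variables (n : nat) (del : R).
Local Notation dn := (dn d T n).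

Definition dn_closed_ball (a : X) := [set w | dn a w <= del].

Definition far_from (s : seq X) := [set w | forall a, a \in s -> del < dn a w].

Lemma dborel_dn_closed_ball a : dborel d (dn_closed_ball a).
Proof.
apply: dborel_dopenC; rewrite (_ : ~` _ = [set w | del < dn a w]).
  exact: dopen_dn_gt.
by apply/seteqP; split => w /=; rewrite /dn_closed_ball /= ltNge => /negP.
Qed.

Lemma dopen_far_from s : dopen d (far_from s).
Proof.
elim: s => [|a s IH]; first by move=> w _; exists 1 => // z _ a; rewrite in_nil.
rewrite (_ : far_from _ = [set w | del < dn a w] `&` far_from s).
  by apply: dopenI; [apply: dopen_dn_gt|].
apply/seteqP; split => w /=.
  by move=> far_w; split=> [|b sb]; apply: far_w; rewrite inE ?eqxx ?sb ?orbT.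
by move=> [aw far_w] b; rewrite inE => /orP[/eqP->//|/far_w].
Qed.

Definition ball_refinement (U : set (set X)) (s : seq X) :=
  dn_closed_ball @` [set` s] `|` [set C `&` far_from s | C in join_cover T U n].

Lemma ball_refinement_borel_cover U s : open_cover d U ->
  borel_cover d (ball_refinement U s).
Proof.
move=> openU; have [finU oU covU] := openU; split.
- rewrite /ball_refinement finite_setU; split; first exact: finite_image.
  exact/finite_image/join_cover_finite.
- move=> _ [[a _ <-]|[C joinC <-]]; first exact: dborel_dn_closed_ball.
  apply: dopen_borel; apply: dopenI; first exact: join_cover_open joinC.
  exact: dopen_far_from.
- move=> w; have [[a sa aw]|near_no] := pselect (exists2 a, a \in s & dn a w <= del).
    by exists (dn_closed_ball a) => //; left; exists a.
  have [C joinC Cw] := join_cover_covers T n covU w.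
  exists (C `&` far_from s); first by right; exists C.
  split=> // a sa; rewrite ltNge; apply/negP => ?; apply: near_no; by exists a.
Qed.

Lemma ball_refinement_refines U s (L : R) : del <= L ->
  (forall z, exists2 A, U A & [set w | d z w <= L] `<=` A) ->
  refines (ball_refinement U s) (join_cover T U n).
Proof.
move=> le_del lebU _ [[a _ <-]|[C joinC <-]]; last by exists C => //; apply: subIsetl.
pose g i := projT1 (cid2 (lebU (iter i T a))).
have gP i : U (g i) /\ [set w | d (iter i T a) w <= L] `<=` g i.
  by rewrite /g; case: cid2.
exists (\bigcap_(i in [set i | (i < n)%N]) (iter i T @^-1` g i)).
  by exists g; split => // i _; case: (gP i).
move=> w /= aw i /= lt_in; apply: (proj2 (gP i)) => /=.
by apply: le_trans le_del; apply: le_trans aw; apply: le_dn.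
Qed.

Lemma cell_weight_far_from K C s :
  (forall y, K y -> exists2 a, a \in s & dn a y <= del) ->
  cell_weight T f n K (C `&` far_from s) = 0.
Proof.
move=> spanning; rewrite /cell_weight ifT //; apply/asboolP/seteqP.
split=> // w [[_ far_w] Kw]; have [a sa aw] := spanning w Kw.
by have := far_w a sa; rewrite ltNge aw.
Qed.

Lemma cell_weight_dn_closed_ball_le K a (r g : R) : del <= r ->
  (forall y z, d y z <= r -> `|f y - f z| <= g) ->
  cell_weight T f n K (dn_closed_ball a) <= expR (n%:R * g) * expR (fsum T f n a).
Proof.
move=> le_del f_unif; apply: cell_weight_le => [|y ay _].
  by rewrite mulr_ge0 ?expR_ge0.
by rewrite -expRD ler_expR; apply: fsum_le_dn_close f_unif (le_trans ay le_del).
Qed.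

Lemma sum_ball_refinement K U s :
  (forall y, K y -> exists2 a, a \in s & dn a y <= del) ->
  \sum_(V \in ball_refinement U s) cell_weight T f n K V
  <= \sum_(a \in [set` s]) cell_weight T f n K (dn_closed_ball a).
Proof.
move=> spanning; rewrite -(fsbig_widen (dn_closed_ball @` [set` s])).
- apply: ler_fsum_image => [|a _]; first exact: finite_seq.
  exact: (cell_weight_ge0 T d_cpt f_cont).
- by move=> V; left.
move=> _ [[[a sa <-]|[C _ <-]] not_ball]; first by case: not_ball; exists a.
exact: cell_weight_far_from.
Qed.

End CoveringBelowSeparated.

Lemma Pn_cov_le_Pn_sep (R : realType) (X : choiceType) (d : X -> X -> R)
  (T : X -> X) (f : X -> R) U (g : R) :
  is_metric d -> dcontinuous_map d T -> dcompact d -> dcontinuous_fun d f ->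
  open_cover d U -> 0 < g -> exists2 del : R, 0 < del & forall n K,
  Pn_cov d T f n U K <= expR (n%:R * g) * Pn_sep d T f n del K.
Proof.
move=> d_metric T_cont d_cpt f_cont openU g_gt0; have [_ oU covU] := openU.
have [L L_gt0 lebU] := lebesgue_number d_metric d_cpt oU covU.
have [r r_gt0 f_unif] := dcontinuous_fun_uniform d_metric d_cpt f_cont g_gt0.
set del := Num.min L r.
have del_gt0 : 0 < del by rewrite lt_min L_gt0 r_gt0.
have [del_L del_r] : del <= L /\ del <= r by rewrite !ge_min !lexx orbT.
exists del => // n K.
have [s [_ sepS spanS]] := exists_spanning_separated d_metric T_cont d_cpt n K del_gt0.
pose W := ball_refinement d T n del U s.
apply: le_trans (_ : _ <= \sum_(V \in W) cell_weight T f n K V) _.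
  apply: Pn_cov_le_refinement_sum => //.
    exact: ball_refinement_borel_cover.
  exact: ball_refinement_refines del_L lebU.
apply: le_trans (sum_ball_refinement d_cpt f_cont U spanS) _.
apply: le_trans (_ : _ <= \sum_(a \in [set` s]) expR (n%:R * g) * expR (fsum T f n a)) _.
  apply: ler_fsum (finite_seq s) _ => a _.
  exact: cell_weight_dn_closed_ball_le del_r f_unif.
rewrite -mulr_fsumr ler_wpM2l ?expR_ge0 //.
exact: sum_separated_le_Pn_sep.
Qed.

Section GrowthRate.
Variable R : realType.
Local Open Scope ereal_scope.

Lemma limn_esup_le_shift (u v : nat -> \bar R) (c : R) :
  (forall n, u n <= c%:E + v n) -> limn_esup u <= c%:E + limn_esup v.
Proof.
move=> le_uv; rewrite -leeBlDl //; apply/ereal_infP => _ [V FV <-].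
rewrite leeBlDl //; apply: le_trans (_ : _ <= ereal_sup (u @` V)) _.
  by apply: ge_ereal_inf; exists (ereal_sup (u @` V)) => //; exists V.
apply: ge_ereal_sup => _ [m Vm <-]; apply: le_trans (le_uv m) _.
by rewrite leeD2l //; apply: ereal_sup_ubound; exists m.
Qed.

Definition growth_rate (a : nat -> R) : \bar R :=
  limn_esup (fun n => ((n%:R)^-1 * ln (a n))%:E).

Lemma growth_rate_le (a b : nat -> R) (g : R) : (0 <= g)%R ->
  (forall n, (0 < a n)%R) -> (forall n, (a n <= expR (n%:R * g) * b n)%R) ->
  growth_rate a <= g%:E + growth_rate b.
Proof.
move=> g_ge0 a_gt0 le_ab; apply: limn_esup_le_shift => -[|n].
  (* the term n = 0 is 0^-1 * ln (a 0) = 0, which is why 0 <= g is needed *)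
  by rewrite invr0 !mul0r adde0 lee_fin.
have b_gt0 : (0 < b n.+1)%R.
  by have := lt_le_trans (a_gt0 n.+1) (le_ab n.+1); rewrite pmulr_rgt0 ?expR_gt0.
have : (ln (a n.+1) <= n.+1%:R * g + ln (b n.+1))%R.
  rewrite -[X in (X + _)%R]expRK -lnM ?posrE ?expR_gt0 //.
  by rewrite ler_ln ?posrE ?mulr_gt0 ?expR_gt0.
rewrite -EFinD lee_fin -(ler_pM2l (_ : 0 < n.+1%:R)%R) ?ltr0n //.
by rewrite mulrDr !mulrA mulfV ?pnatr_eq0 // !mul1r.
Qed.

Lemma le_growth_rate (a b : nat -> R) : (forall n, (0 < a n)%R) ->
  (forall n, (a n <= b n)%R) -> growth_rate a <= growth_rate b.
Proof.
move=> a_gt0 le_ab; rewrite -[leRHS]add0e.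
by apply: growth_rate_le => // n; rewrite mulr0 expR0 mul1r.
Qed.

End GrowthRate.

Lemma growth_rate_Pn_sep_cvg (R : realType) (X : choiceType) (d : X -> X -> R)
  (T : X -> X) (f : X -> R) (K : nat -> set X) :
  is_metric d -> dcontinuous_map d T -> dcompact d -> dcontinuous_fun d f ->
  (forall n, K n !=set0) ->
  growth_rate (fun n => Pn_sep d T f n del (K n)) @[del --> 0^'+] -->
  ereal_sup [set growth_rate (fun n => Pn_sep d T f n del (K n))
             | del in [set` `]0, +oo[%R]].
Proof.
move=> d_metric T_cont d_cpt f_cont K_ne.
apply: nonincreasing_at_right_cvge => // del1 del2.
rewrite !in_itv /= !andbT => del1_gt0 del2_gt0 le_del.
apply: le_growth_rate => n; have [y Ky] := K_ne n.
  exact: Pn_sep_gt0 Ky del2_gt0.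
exact: Pn_sep_antitone.
Qed.

Lemma iter_can (A : Type) (g h : A -> A) n :
  cancel h g -> cancel (iter n h) (iter n g).
Proof. by move=> hK; elim: n => // n IH a; rewrite iterSr iterS hK IH. Qed.

Unset Implicit Arguments.

Theorem lemma3p2 (R : realType) (X : choiceType) (d : X -> X -> R)
  (T Tinv : X -> X) (f : X -> R) :
  is_metric d -> dcompact d -> dhomeo d T Tinv -> dcontinuous_fun d f ->
  forall (x : X) (eps : R), 0 < eps ->
  Ps d T f x eps =
  ereal_sup [set limn_esup (fun n : nat =>
               ((n%:R)^-1 * ln (Pn_cov d T f n U ((iter n T) @^-1` Ws d T x eps)))%:E)
            | U in open_cover d].
Proof.
move=> d_metric d_cpt [_ TinvK T_cont _] f_cont x eps eps_gt0.
set K := fun n => iter n T @^-1` Ws d T x eps.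
have K_ne n : K n !=set0.
  exists (iter n Tinv x); rewrite /K /preimage /= (iter_can n TinvK).
  by move=> k; rewrite metric_xx // ltW.
rewrite /Ps (cvg_lim _ (growth_rate_Pn_sep_cvg d_metric T_cont d_cpt f_cont K_ne)) //.
apply/eqP; rewrite eq_le; apply/andP; split.
  apply: ge_ereal_sup => _ [del + <-]; rewrite /= in_itv /= andbT => del_gt0.
  have half_gt0 : 0 < del / 2 by rewrite divr_gt0.
  have [U openU U_balls] := exists_dball_cover d_metric d_cpt half_gt0.
  apply: le_trans (_ : _ <= growth_rate (fun n => Pn_cov d T f n U (K n)))%E _; last first.
    by apply: ereal_sup_ubound; exists U.
  apply: le_growth_rate => n; have [y Ky] := K_ne n.
    exact: Pn_sep_gt0 Ky del_gt0.
  rewrite {1}(splitr del) -mulr2n.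
  exact: Pn_sep_le_Pn_cov_dball_cover.
apply: ge_ereal_sup => _ [U openU <-]; apply/lee_addgt0Pr => g g_gt0.
have [del del_gt0 cov_le_sep] :=
  Pn_cov_le_Pn_sep d_metric T_cont d_cpt f_cont openU g_gt0.
apply: le_trans (growth_rate_le (ltW g_gt0) _ (fun n => cov_le_sep n (K n))) _.
  by move=> n; have [y Ky] := K_ne n; apply: Pn_cov_gt0 Ky openU.
rewrite addeC leeD2r //; apply: ereal_sup_ubound; exists del => //=.
by rewrite in_itv /= andbT.
Qed.
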